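(* Let $\mathbf a=(a_1,\ldots,a_n)\in\mathbb Z_{\geq1}^n$ and $\mathbf b=(b_1,\ldots,b_m)\in\mathbb Z_{\geq1}^m$, let $d_{i,j}=\gcd(a_i,b_j)$, and let $F_{\mathbf a,\mathbf b}(\mathbf z,\mathbf w)=\sum_{(\mathbf x,\mathbf y)\in\mathcal S(\mathbf a,\mathbf b)} z_1^{x_1}\cdots z_n^{x_n}w_1^{y_1}\cdots w_m^{y_m}$. Then $F_{\mathbf a,\mathbf b}$ is a rational function with denominator $D_{\mathbf a,\mathbf b}(\mathbf z,\mathbf w)=\prod_{(\mathbf x,\mathbf y)\in\mathcal S_c}(1-\mathbf z^{\mathbf x}\mathbf w^{\mathbf y})=\prod_{i=1}^n\prod_{j=1}^m\left(1-z_i^{b_j/d_{i,j}}w_j^{a_i/d_{i,j}}\right)$, i.e., $F_{\mathbf a,\mathbf b}=P/D_{\mathbf a,\mathbf b}$ for some polynomial $P$.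
   Context: $\mathcal S(\mathbf a,\mathbf b)$ is the set of $(\mathbf x,\mathbf y)\in\mathbb Z_{\geq0}^n\times\mathbb Z_{\geq0}^m$ with $\sum_ix_ia_i=\sum_jy_jb_j$, and $\mathbf z^{\mathbf x}=z_1^{x_1}\cdots z_n^{x_n}$, $\mathbf w^{\mathbf y}=w_1^{y_1}\cdots w_m^{y_m}$. $\mathcal S_c=\mathcal S_c(\mathbf a,\mathbf b)$ is the set of completely fundamental solutions: $(\mathbf x,\mathbf y)\in\mathcal S(\mathbf a,\mathbf b)$ such that for every $k\in\mathbb Z_{\geq1}$ and every decomposition $k(\mathbf x,\mathbf y)=(\mathbf x',\mathbf y')+(\mathbf x'',\mathbf y'')$ with both summands in $\mathcal S(\mathbf a,\mathbf b)$, there are nonnegative integers $r,s$ with $(\mathbf x',\mathbf y')=r(\mathbf x,\mathbf y)$, $(\mathbf x'',\mathbf y'')=s(\mathbf x,\mathbf y)$, $r+s=k$. *)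

From mathcomp Require Import all_boot all_order all_algebra.
From mathcomp Require Import mpoly.
Set Implicit Arguments. Unset Strict Implicit. Unset Printing Implicit Defensive.
Import GRing.Theory.
Local Open Scope ring_scope.

(* A pair (x, y) in Z_{>=0}^n x Z_{>=0}^m is encoded as one monomial
   v : 'X_{1..n+m}: the z-exponents are v (lshift m i), the w-exponents are
   v (rshift n j).  Thus z^x w^y is the mpoly monomial 'X_[v]. *)

Definition xpart (n m : nat) (v : 'X_{1..n + m}) (i : 'I_n) : nat := v (lshift m i).
Definition ypart (n m : nat) (v : 'X_{1..n + m}) (j : 'I_m) : nat := v (rshift n j).

Definition inS (n m : nat) (a : 'I_n -> nat) (b : 'I_m -> nat) (v : 'X_{1..n + m}) : bool :=
  (\sum_(i < n) xpart v i * a i)%N == (\sum_(j < m) ypart v j * b j)%N.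

(* Completely fundamental solutions S_c(a,b). As in Stanley's definition,
   the zero solution is excluded. *)
Definition completely_fundamental (n m : nat) (a : 'I_n -> nat) (b : 'I_m -> nat)
  (v : 'X_{1..n + m}) : Prop :=
  inS a b v /\ v <> 0%MM /\
  forall (k : nat) (v' v'' : 'X_{1..n + m}), (0 < k)%N ->
    inS a b v' -> inS a b v'' -> (v *+ k)%MM = (v' + v'')%MM ->
    exists r s : nat, v' = (v *+ r)%MM /\ v'' = (v *+ s)%MM /\ (r + s)%N = k.

(* The exponent of z_i^{b_j/d_ij} w_j^{a_i/d_ij}. *)
Definition eij (n m : nat) (a : 'I_n -> nat) (b : 'I_m -> nat) (i : 'I_n) (j : 'I_m)
  : 'X_{1..n + m} :=
  [multinom match split k with
            | inl i' => if i' == i then (b j %/ gcdn (a i) (b j))%N else 0%N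
            | inr j' => if j' == j then (a i %/ gcdn (a i) (b j))%N else 0%N
            end | k < n + m].

Definition Dab (n m : nat) (a : 'I_n -> nat) (b : 'I_m -> nat) : {mpoly int[n + m]} :=
  \prod_(i < n) \prod_(j < m) (1 - 'X_[eij a b i j]).

(* Coefficient of monomial e in the formal power series F_{a,b} * Q,
   where F_{a,b} = sum_{v in S(a,b)} 'X_[v] and Q is a polynomial. *)
Definition coef_FS_mul (n m : nat) (a : 'I_n -> nat) (b : 'I_m -> nat)
  (Q : {mpoly int[n + m]}) (e : 'X_{1..n + m}) : int :=
  \sum_(t <- msupp Q | (t <= e)%MM) Q@_t * (inS a b (e - t)%MM)%:R.

From mathcomp Require Import all_boot all_order all_algebra.
From mathcomp Require Import mpoly zify.
Set Implicit Arguments. Unset Strict Implicit. Unset Printing Implicit Defensive.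
Import GRing.Theory.

(* Write d = gcd(a_i, b_j) and e_ij for the monomial z_i^(b_j/d) w_j^(a_i/d).
   Since b_j/d and a_i/d are coprime, every solution supported on {z_i, w_j} is a
   multiple of e_ij; hence e_ij is completely fundamental.  Conversely, if v is
   completely fundamental and v_{z_i}, v_{w_j} > 0, then e_ij <= k v for
   k = a_i b_j, and splitting k v = e_ij + (k v - e_ij) makes e_ij a multiple of
   v, so v = e_ij.

   For the second part, every monomial of D is bounded by the exponent sum E of
   its factors, and the coefficient of F D at e vanishes once some exponent of e
   is large.  If, say, e_{z_i} is large and e_{w_j} >= E_{w_j} for some j, write
   D = R (1 - X^{e_ij}): the coefficients of F R at e and at e - e_ij agree
   because e_ij is a solution.  Otherwise all the w-exponents of e are small,
   so no solution e - t with t <= E has the large z-exponent. *)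

Section MpolyPairing.
Variables (R : ringType) (k : nat).
Local Open Scope ring_scope.
Implicit Types (g : 'X_{1..k} -> R) (p q : {mpoly R[k]}).

Definition mpair g p : R := \sum_(t <- msupp p) p@_t * g t.

Lemma mpairE_subset g p (r : seq 'X_{1..k}) : uniq r -> {subset msupp p <= r} ->
  mpair g p = \sum_(t <- r) p@_t * g t.
Proof.
move=> ur sub; rewrite (bigID (mem (msupp p))) /= [X in _ + X]big1 ?addr0; last first.
  by move=> t /memN_msupp_eq0 ->; rewrite mul0r.
rewrite -big_filter; apply: perm_big; apply: uniq_perm.
- exact: msupp_uniq.
- exact: filter_uniq.
by move=> t; rewrite mem_filter; case: (boolP (t \in msupp p)) => // /sub ->.
Qed.

Lemma mpairB g p q : mpair g (p - q) = mpair g p - mpair g q.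
Proof.
have ur := undup_uniq (msupp p ++ msupp q).
rewrite !(mpairE_subset _ ur) -?sumrB.
- by apply: eq_bigr => t _; rewrite mcoeffB mulrBl.
- by move=> t tq; rewrite mem_undup mem_cat tq orbT.
- by move=> t tp; rewrite mem_undup mem_cat tp.
- by move=> t /msuppB_le; rewrite mem_undup.
Qed.

Lemma mpairMX g p f : mpair g (p * 'X_[f]) = mpair (fun t => g (f + t)%MM) p.
Proof.
rewrite /mpair (perm_big _ (msuppMX p f)) big_map.
by apply: eq_bigr => t _; rewrite mcoeffMX.
Qed.

Lemma eq_in_mpair g1 g2 p : {in msupp p, g1 =1 g2} -> mpair g1 p = mpair g2 p.
Proof. by move=> eq_g; rewrite /mpair !big_seq; apply: eq_bigr => t /eq_g ->. Qed.

Lemma mpair_eq0 g p : {in msupp p, forall t, g t = 0} -> mpair g p = 0.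
Proof. by move=> g0; rewrite /mpair big_seq big1 // => t /g0 ->; rewrite mulr0. Qed.

Lemma msupp_prod_1subX_le (I : Type) (r : seq I) (P : pred I) (F : I -> 'X_{1..k}) t :
  t \in msupp (\prod_(i <- r | P i) (1 - 'X_[F i]) : {mpoly R[k]}) ->
  (t <= \sum_(i <- r | P i) F i)%MM.
Proof.
elim: r t => [|i r IHr] t.
  rewrite !big_nil mcoeff_msupp mcoeff1.
  by case: (t =P 0%MM) => [-> _|]; rewrite ?lepm_refl ?eqxx.
rewrite !big_cons; case: (P i) => [|/IHr //].
move=> /msuppM_le /allpairsP [[t1 t2] /= [t1P /IHr t2r ->]].
apply/mnm_lepP => j; rewrite !mnmDE leq_add ?(mnm_lepP t2r) //.
move/msuppB_le: t1P; rewrite mem_cat msuppX mem_seq1 => /orP[|/eqP -> //].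
by rewrite mcoeff_msupp mcoeff1; case: (t1 =P 0%MM) => [-> _|]; rewrite ?mnm0E ?eqxx.
Qed.

Lemma mpoly_of_box_support (E : 'X_{1..k} -> R) B :
  (forall (e : 'X_{1..k}) i, (B <= e i)%N -> E e = 0) ->
  exists P : {mpoly R[k]}, forall e, P@_e = E e.
Proof.
move=> E0; exists (\sum_(e : 'X_{1..k < (k * B).+1}) E e *: 'X_[e]) => e.
case: (ltnP (mdeg e) (k * B).+1) => [/mcoeff_mpoly -> //|large].
have [i Bi] : exists i, (B <= e i)%N.
  apply/existsP; apply: contraTT large.
  rewrite negb_exists -ltnNge ltnS mdegE => /forallP small.
  rewrite -[k in (_ <= k * _)%N]card_ord -sum_nat_const.
  by apply: leq_sum => i _; rewrite ltnW // ltnNge small.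
rewrite (E0 _ _ Bi) raddf_sum big1 // => u _.
rewrite /= mcoeffZ mcoeffX; case: eqP => [ue|]; last by rewrite mulr0.
by move: (bmdeg u) large; rewrite ue => /leq_trans h /h; rewrite ltnn.
Qed.

End MpolyPairing.

Section Solutions.
Variables (n m : nat) (a : 'I_n -> nat) (b : 'I_m -> nat).
Hypotheses (a_gt0 : forall i, 0 < a i) (b_gt0 : forall j, 0 < b j).
Implicit Types (u v e : 'X_{1..n + m}).

Lemma eq_mnm_split u v :
  (forall i, xpart u i = xpart v i) -> (forall j, ypart u j = ypart v j) -> u = v.
Proof.
move=> eq_x eq_y; apply/mnmP => k; rewrite -(splitK k).
by case: (split k) => [i|j] /=; [apply: eq_x | apply: eq_y].
Qed.

Lemma inSD u e : inS a b e -> inS a b (u + e)%MM = inS a b u.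
Proof.
rewrite /inS /xpart /ypart => /eqP Se.
under eq_bigr do rewrite mnmDE mulnDl.
under [X in _ == X]eq_bigr do rewrite mnmDE mulnDl.
by rewrite !big_split /= Se eqn_add2r.
Qed.

Lemma inSMn u k : inS a b u -> inS a b (u *+ k)%MM.
Proof.
rewrite /inS /xpart /ypart => /eqP Su.
under eq_bigr do rewrite mulmnE mulnAC.
under [X in _ == X]eq_bigr do rewrite mulmnE mulnAC.
by rewrite -!big_distrl /= Su.
Qed.

Lemma inS_xpart_le v i : inS a b v -> xpart v i <= \sum_(j < m) ypart v j * b j.
Proof.
move=> /eqP <-; apply: leq_trans (leq_pmulr _ (a_gt0 i)) _.
by rewrite (bigD1 i) //= leq_addr.
Qed.

Lemma inS_ypart_le v j : inS a b v -> ypart v j <= \sum_(i < n) xpart v i * a i.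
Proof.
move=> /eqP ->; apply: leq_trans (leq_pmulr _ (b_gt0 j)) _.
by rewrite (bigD1 j) //= leq_addr.
Qed.

Lemma inS_xpart_eq0 v : inS a b v -> (forall i, xpart v i = 0) -> v = 0%MM.
Proof.
move=> Sv x0; have y0 j : ypart v j = 0.
  by apply/eqP; rewrite -leqn0; have := inS_ypart_le j Sv; rewrite big1 // => i _; rewrite x0.
by apply: eq_mnm_split => [i|j]; rewrite /xpart /ypart mnm0E; [apply: x0 | apply: y0].
Qed.

Lemma inS_ypart_eq0 v : inS a b v -> (forall j, ypart v j = 0) -> v = 0%MM.
Proof.
move=> Sv y0; have x0 i : xpart v i = 0.
  by apply/eqP; rewrite -leqn0; have := inS_xpart_le i Sv; rewrite big1 // => j _; rewrite y0.
by apply: eq_mnm_split => [i|j]; rewrite /xpart /ypart mnm0E; [apply: x0 | apply: y0].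
Qed.

Lemma inS_neq0 v : inS a b v -> v != 0%MM ->
  exists i j, 0 < xpart v i /\ 0 < ypart v j.
Proof.
move=> Sv nz_v.
have [i xi] : exists i, 0 < xpart v i.
  apply/existsP; apply: contraNT nz_v; rewrite negb_exists => /forallP x0.
  by apply/eqP/inS_xpart_eq0 => // i; apply/eqP; rewrite -leqn0 leqNgt x0.
have [j yj] : exists j, 0 < ypart v j.
  apply/existsP; apply: contraNT nz_v; rewrite negb_exists => /forallP y0.
  by apply/eqP/inS_ypart_eq0 => // j; apply/eqP; rewrite -leqn0 leqNgt y0.
by exists i, j.
Qed.

End Solutions.

Section FundamentalSolutions.
Variables (n m : nat) (a : 'I_n -> nat) (b : 'I_m -> nat).
Hypotheses (a_gt0 : forall i, 0 < a i) (b_gt0 : forall j, 0 < b j).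

Local Notation aq i j := (a i %/ gcdn (a i) (b j)).
Local Notation bq i j := (b j %/ gcdn (a i) (b j)).

Lemma eij_lshift i j i' : eij a b i j (lshift m i') = if i' == i then bq i j else 0.
Proof. by rewrite /eij mnmE (unsplitK (inl i' : 'I_n + 'I_m)). Qed.

Lemma eij_rshift i j j' : eij a b i j (rshift n j') = if j' == j then aq i j else 0.
Proof. by rewrite /eij mnmE (unsplitK (inr j' : 'I_n + 'I_m)). Qed.

Lemma eij_supp i j k : eij a b i j k != 0 -> k = lshift m i \/ k = rshift n j.
Proof.
rewrite -(splitK k); case: (split k) => [i'|j'] /=.
- by rewrite eij_lshift; case: (i' =P i) => [->|]; [left|rewrite eqxx].
- by rewrite eij_rshift; case: (j' =P j) => [->|]; [right|rewrite eqxx].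
Qed.

Let d_gt0 i j : 0 < gcdn (a i) (b j).
Proof. by rewrite gcdn_gt0 a_gt0. Qed.

Lemma aq_gt0 i j : 0 < aq i j.
Proof. by rewrite divn_gt0 ?d_gt0 // dvdn_leq ?a_gt0 ?dvdn_gcdl. Qed.

Lemma bq_gt0 i j : 0 < bq i j.
Proof. by rewrite divn_gt0 ?d_gt0 // dvdn_leq ?b_gt0 ?dvdn_gcdr. Qed.

Lemma eqn_mul_aq_bq i j x y : (x * a i == y * b j) = (x * aq i j == y * bq i j).
Proof.
by rewrite -[RHS](eqn_pmul2r (d_gt0 i j)) -!mulnA !divnK ?dvdn_gcdl ?dvdn_gcdr.
Qed.

Lemma coprime_bq_aq i j : coprime (bq i j) (aq i j).
Proof.
rewrite /coprime -(eqn_pmul2r (d_gt0 i j)) mul1n muln_gcdl !divnK ?dvdn_gcdl ?dvdn_gcdr //.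
by rewrite gcdnC.
Qed.

Lemma inS_only1 u i j :
  (forall i', i' != i -> xpart u i' = 0) -> (forall j', j' != j -> ypart u j' = 0) ->
  inS a b u = (xpart u i * aq i j == ypart u j * bq i j).
Proof.
move=> x0 y0; rewrite /inS -eqn_mul_aq_bq (big_only1 i) ?(big_only1 j) //.
- by move=> j' /y0 ->.
- by move=> i' /x0 ->.
Qed.

Lemma inS_eij i j : inS a b (eij a b i j).
Proof.
rewrite (inS_only1 (i := i) (j := j)) /xpart /ypart => [|i'|j'];
  rewrite ?eij_lshift ?eij_rshift.
- by rewrite !eqxx mulnC.
- by move/negbTE ->.
- by move/negbTE ->.
Qed.

Lemma eij_supp_inS i j u : inS a b u ->
  (forall k, eij a b i j k = 0 -> u k = 0) -> exists c, u = (eij a b i j *+ c)%MM.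
Proof.
move=> Su supp_u.
have x0 i' : i' != i -> xpart u i' = 0.
  by move=> ne; apply: supp_u; rewrite eij_lshift (negbTE ne).
have y0 j' : j' != j -> ypart u j' = 0.
  by move=> ne; apply: supp_u; rewrite eij_rshift (negbTE ne).
move: Su; rewrite (inS_only1 x0 y0) => /eqP xy.
have [c xE] : exists c, xpart u i = c * bq i j.
  by apply/dvdnP; rewrite -(Gauss_dvdl _ (coprime_bq_aq i j)) xy dvdn_mull.
have yE : ypart u j = c * aq i j.
  by apply/eqP; rewrite -(eqn_pmul2r (bq_gt0 i j)) -xy xE mulnAC.
exists c; apply: eq_mnm_split => [i'|j']; rewrite /xpart /ypart mulmnE.
- by rewrite eij_lshift; case: eqP => [->|/eqP /x0 //]; rewrite mulnC.
- by rewrite eij_rshift; case: eqP => [->|/eqP /y0 //]; rewrite mulnC.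
Qed.

Lemma eij_mulmn_inj i j : injective (fun c => eij a b i j *+ c)%MM.
Proof.
move=> c1 c2 /mnmP /(_ (lshift m i)); rewrite !mulmnE eij_lshift eqxx.
by move/eqP; rewrite eqn_mul2l gtn_eqF ?bq_gt0 // => /eqP.
Qed.

Lemma eij_neq0 i j : eij a b i j != 0%MM.
Proof.
apply/eqP => e0; suff /eij_mulmn_inj : (eij a b i j *+ 1 = eij a b i j *+ 0)%MM by [].
by rewrite mulm1n e0.
Qed.

Lemma completely_fundamental_eij i j : completely_fundamental a b (eij a b i j).
Proof.
split; [exact: inS_eij | split; first exact/eqP/eij_neq0].
move=> k v' v'' _ S' S'' /mnmP split_k.
have supp_v k' : eij a b i j k' = 0 -> v' k' = 0 /\ v'' k' = 0.
  move=> e0; move: (split_k k'); rewrite mulmnE mnmDE e0 mul0n => /esym/eqP.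
  by rewrite addn_eq0 => /andP[/eqP -> /eqP ->].
have [r v'E] := eij_supp_inS S' (fun k' e0 => proj1 (supp_v k' e0)).
have [s v''E] := eij_supp_inS S'' (fun k' e0 => proj2 (supp_v k' e0)).
exists r, s; split=> //; split=> //.
apply: (eij_mulmn_inj (i := i) (j := j)); apply/mnmP => k' /=.
by rewrite split_k v'E v''E !mnmDE !mulmnE mulnDr.
Qed.

Lemma completely_fundamental_eijP v :
  completely_fundamental a b v -> exists i j, v = eij a b i j.
Proof.
case=> Sv [/eqP nz_v cf]; have [i [j [xi yj]]] := inS_neq0 a_gt0 b_gt0 Sv nz_v.
exists i, j; set e := eij a b i j; set k := a i * b j.
have k_gt0 : 0 < k by rewrite muln_gt0 a_gt0 b_gt0.
have le_e : (e <= v *+ k)%MM.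
  apply/mnm_lepP => q; rewrite mulmnE -(splitK q); case: (split q) => [i'|j'] /=.
  - rewrite eij_lshift; case: eqP => [->|_] //; apply: leq_trans (leq_div _ _) _.
    by move: xi; rewrite /xpart /k; have := a_gt0 i; nia.
  - rewrite eij_rshift; case: eqP => [->|_] //; apply: leq_trans (leq_div _ _) _.
    by move: yj; rewrite /ypart /k; have := b_gt0 j; nia.
have S_rest : inS a b (v *+ k - e)%MM.
  by rewrite -(inSD _ (inS_eij i j)) submK // inSMn.
have vkE : (v *+ k = e + (v *+ k - e))%MM by rewrite addmC submK.
have [r [s [eE _]]] := cf k e _ k_gt0 (inS_eij i j) S_rest vkE.
have r_gt0 : 0 < r.
  by case: r eE => // eE; move: (eij_neq0 i j); rewrite -/e eE mulm0n eqxx.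
have supp_v q : e q = 0 -> v q = 0.
  by rewrite eE mulmnE => /eqP; rewrite muln_eq0 (gtn_eqF r_gt0) orbF => /eqP.
have [c vE] := eij_supp_inS Sv supp_v.
have : (e *+ 1 = e *+ (c * r))%MM.
  by rewrite mulm1n {1}eE vE; apply/mnmP => q; rewrite !mulmnE mulnA.
move/eij_mulmn_inj/esym/eqP; rewrite muln_eq1 => /andP[/eqP c1 _].
by rewrite vE c1 mulm1n.
Qed.

Lemma eij_inj : injective (fun p : 'I_n * 'I_m => eij a b p.1 p.2).
Proof.
move=> [i j] [i' j'] /= /mnmP eq_e; congr pair; apply/eqP.
- move: (eq_e (lshift m i)); rewrite !eij_lshift eqxx.
  by case: eqP => // _ /eqP; rewrite gtn_eqF ?bq_gt0.
- move: (eq_e (rshift n j)); rewrite !eij_rshift eqxx.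
  by case: eqP => // _ /eqP; rewrite gtn_eqF ?aq_gt0.
Qed.

End FundamentalSolutions.

Section SeriesTimesDenominator.
Variables (n m : nat) (a : 'I_n -> nat) (b : 'I_m -> nat).
Hypotheses (a_gt0 : forall i, 0 < a i) (b_gt0 : forall j, 0 < b j).
Local Open Scope ring_scope.
Implicit Types (Q R : {mpoly int[n + m]}) (e f t T : 'X_{1..n + m}).

Definition inS_gap e t : bool := (t <= e)%MM && inS a b (e - t)%MM.

Lemma coef_FS_mulE Q e : coef_FS_mul a b Q e = mpair (fun t => (inS_gap e t)%:R) Q.
Proof.
rewrite /coef_FS_mul /mpair big_mkcond /=; apply: eq_bigr => t _.
by rewrite /inS_gap; case: (t <= e)%MM; rewrite ?mulr0.
Qed.

Lemma inS_gapDl e f t : inS a b f -> ((t <= e)%MM -> (f + t <= e)%MM) ->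
  inS_gap e (f + t) = inS_gap e t.
Proof.
move=> Sf le_ft; rewrite /inS_gap; case: (boolP (t <= e)%MM) => [le_t | lt_t] /=.
  rewrite le_ft //= -(inSD _ Sf); congr (inS a b _); apply/mnmP => k.
  by have := mnm_lepP (le_ft le_t) k; rewrite !mnmDE !mnmBE mnmDE; lia.
apply: negbTE; apply: contra lt_t => /andP[le_ft' _].
exact: lepm_trans (lem_addl f t) le_ft'.
Qed.

Lemma coef_FS_mul_1subX_eq0 R f T e :
  inS a b f -> {in msupp R, forall t, (t <= T)%MM} ->
  (forall k, f k != 0%N -> (T k + f k <= e k)%N) ->
  coef_FS_mul a b (R * (1 - 'X_[f])) e = 0.
Proof.
move=> Sf R_le e_ge; rewrite coef_FS_mulE mulrBr mulr1 mpairB mpairMX.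
apply/eqP; rewrite subr_eq0; apply/eqP/eq_in_mpair => t /R_le le_tT.
rewrite inS_gapDl // => le_te.
apply/mnm_lepP => k; rewrite mnmDE; have [->|/e_ge] := eqVneq (f k) 0%N.
  exact: mnm_lepP le_te k.
by apply: leq_trans; rewrite addnC leq_add2r (mnm_lepP le_tT).
Qed.

Lemma coef_FS_mul_eq0_lshift Q T e i : {in msupp Q, forall t, (t <= T)%MM} ->
  (T (lshift m i) + \sum_(j < m) ypart e j * b j < e (lshift m i))%N ->
  coef_FS_mul a b Q e = 0.
Proof.
move=> Q_le e_gt; rewrite coef_FS_mulE; apply: mpair_eq0 => t /Q_le le_tT.
rewrite /inS_gap; case: (boolP (t <= e)%MM) => //= le_te.
case: (boolP (inS a b (e - t)%MM)) => // S_et; exfalso.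
have := inS_xpart_le a_gt0 i S_et.
have : (\sum_(j < m) ypart (e - t) j * b j <= \sum_(j < m) ypart e j * b j)%N.
  by apply: leq_sum => j _; rewrite leq_mul2r /ypart mnmBE leq_subr orbT.
have := mnm_lepP le_tT (lshift m i); move: e_gt; rewrite /xpart mnmBE; lia.
Qed.

Lemma coef_FS_mul_eq0_rshift Q T e j : {in msupp Q, forall t, (t <= T)%MM} ->
  (T (rshift n j) + \sum_(i < n) xpart e i * a i < e (rshift n j))%N ->
  coef_FS_mul a b Q e = 0.
Proof.
move=> Q_le e_gt; rewrite coef_FS_mulE; apply: mpair_eq0 => t /Q_le le_tT.
rewrite /inS_gap; case: (boolP (t <= e)%MM) => //= le_te.
case: (boolP (inS a b (e - t)%MM)) => // S_et; exfalso.
have := inS_ypart_le b_gt0 j S_et.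
have : (\sum_(i < n) xpart (e - t) i * a i <= \sum_(i < n) xpart e i * a i)%N.
  by apply: leq_sum => i _; rewrite leq_mul2r /xpart mnmBE leq_subr orbT.
have := mnm_lepP le_tT (rshift n j); move: e_gt; rewrite /ypart mnmBE; lia.
Qed.

Definition Dab_exp : 'X_{1..n + m} := (\sum_(p : 'I_n * 'I_m) eij a b p.1 p.2)%MM.

Lemma DabE : Dab a b = \prod_(p : 'I_n * 'I_m) (1 - 'X_[eij a b p.1 p.2]).
Proof. by rewrite /Dab pair_big. Qed.

Lemma msupp_Dab_le t : t \in msupp (Dab a b) -> (t <= Dab_exp)%MM.
Proof. by rewrite DabE => /msupp_prod_1subX_le. Qed.

Lemma coef_FS_mul_Dab_eq0_shift e i j :
  (Dab_exp (lshift m i) <= e (lshift m i))%N ->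
  (Dab_exp (rshift n j) <= e (rshift n j))%N ->
  coef_FS_mul a b (Dab a b) e = 0.
Proof.
move=> e_ge_i e_ge_j; rewrite DabE (bigD1 (i, j)) //= mulrC.
set T := (\sum_(p | p != (i, j)) eij a b p.1 p.2)%MM.
have DE : (T + eij a b i j)%MM = Dab_exp by rewrite /Dab_exp (bigD1 (i, j)) //= addmC.
apply: (coef_FS_mul_1subX_eq0 (T := T)) => [|t|k nz_k].
- exact: inS_eij.
- exact: msupp_prod_1subX_le.
- by rewrite -mnmDE DE; case: (eij_supp nz_k) => ->.
Qed.

Definition Dab_bound : nat :=
  (mdeg Dab_exp + \sum_(i < n) xpart Dab_exp i * a i
                + \sum_(j < m) ypart Dab_exp j * b j)%N.+1.

Lemma coef_FS_mul_Dab_eq0 e k : (Dab_bound <= e k)%N -> coef_FS_mul a b (Dab a b) e = 0.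
Proof.
have le_mdeg q : (Dab_exp q <= mdeg Dab_exp)%N by rewrite mdegE (bigD1 q) //= leq_addr.
rewrite /Dab_bound -(splitK k); case: (split k) => [i|j] /= e_ge.
- case: (boolP [exists j, Dab_exp (rshift n j) <= e (rshift n j)]%N)
    => [/existsP [j e_ge_j] | /existsPn e_lt].
    apply: (coef_FS_mul_Dab_eq0_shift (i := i) _ e_ge_j).
    by have := le_mdeg (lshift m i); lia.
  apply: (coef_FS_mul_eq0_lshift (T := Dab_exp) (i := i)) => [t /msupp_Dab_le //|].
  apply: leq_ltn_trans e_ge; rewrite -addnA leq_add // (leq_trans _ (leq_addl _ _)) //.
  by apply: leq_sum => j _; rewrite leq_mul2r ltnW ?orbT // ltnNge; apply: e_lt.
- case: (boolP [exists i, Dab_exp (lshift m i) <= e (lshift m i)]%N)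
    => [/existsP [i e_ge_i] | /existsPn e_lt].
    apply: (coef_FS_mul_Dab_eq0_shift (j := j) e_ge_i).
    by have := le_mdeg (rshift n j); lia.
  apply: (coef_FS_mul_eq0_rshift (T := Dab_exp) (j := j)) => [t /msupp_Dab_le //|].
  apply: leq_ltn_trans e_ge; rewrite -addnA leq_add // (leq_trans _ (leq_addr _ _)) //.
  by apply: leq_sum => i _; rewrite leq_mul2r ltnW ?orbT // ltnNge; apply: e_lt.
Qed.

End SeriesTimesDenominator.

Local Open Scope ring_scope.

Theorem corollary6 (n m : nat) (a : 'I_n -> nat) (b : 'I_m -> nat)
  (ha : forall i, (0 < a i)%N) (hb : forall j, (0 < b j)%N) :
  (exists s : seq 'X_{1..n + m},
     [/\ uniq s,
         (forall v, v \in s <-> completely_fundamental a b v) &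
         \prod_(v <- s) (1 - 'X_[v]) = Dab a b]) /\
  (exists P : {mpoly int[n + m]},
     forall e : 'X_{1..n + m}, P@_e = coef_FS_mul a b (Dab a b) e).
Proof.
split; last exact: mpoly_of_box_support (coef_FS_mul_Dab_eq0 ha hb).
exists [seq eij a b p.1 p.2 | p <- enum {: 'I_n * 'I_m}]; split.
- by rewrite map_inj_uniq ?enum_uniq //; apply: eij_inj.
- move=> v; split=> [/mapP [p _ ->] | /(completely_fundamental_eijP ha hb) [i [j ->]]].
    exact: completely_fundamental_eij.
  by apply/mapP; exists (i, j); rewrite ?mem_enum.
- by rewrite big_map big_enum DabE.
Qed.
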